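(* Let $n,k,d,d_p$ be positive integers with $d_p\ge n$, and let $\mathbf{P}\in\mathbb{R}^{n\times d_p}$ have orthonormal rows $\mathbf{P}_1,\dots,\mathbf{P}_n$. Let $\mu$ be any order-$2k$ equivalence class, i.e. $\mu\in[n]^{2k}/_\sim$, with basis tensor $\mathbf{B}^\mu\in\mathbb{R}^{n^{2k}}$, regarded as an $n^k\times n^k$ matrix $\mathbf{B}^\mu_{\mathbf{i},\mathbf{j}}$ indexed by $\mathbf{i},\mathbf{j}\in[n]^k$. Then for every $\delta>0$ there exist a type identifier dimension $d_e$, type identifiers $\mathbf{E}^{\gamma}\in\mathbb{R}^{d_e}$ (one for each order-$k$ equivalence class $\gamma$), a hidden dimension $d_{\mathcal{T}}$, an input projection $w^{in}\in\mathbb{R}^{(d+kd_p+d_e)\times d_{\mathcal{T}}}$, a head dimension $d_H$, and query/key parameters $w^Q,w^K\in\mathbb{R}^{d_{\mathcal{T}}\times d_H}$, $b^Q,b^K\in\mathbb{R}^{d_H}$ such that for every $\mathbf{X}\in\mathbb{R}^{n^k\times d}$ the self-attention coefficients $\boldsymbol{\alpha}$ computed from $\mathbf{Z}=\mathbf{X}^{in}w^{in}$ satisfy $$\Big|\boldsymbol{\alpha}_{\mathbf{i},\mathbf{j}}-\frac{\mathbf{B}^\mu_{\mathbf{i},\mathbf{j}}}{\sum_{\mathbf{j}'\in[n]^k}\mathbf{B}^\mu_{\mathbf{i},\mathbf{j}'}}\Big|<\delta$$ for all $\mathbf{i},\mathbf{j}\in[n]^k$ such that $\sum_{\mathbf{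j}'}\mathbf{B}^\mu_{\mathbf{i},\mathbf{j}'}>0$.
   Context: For $l\ge1$, the equivalence relation $\sim$ on $[n]^l$ relates $\mathbf{i}\sim\mathbf{j}$ iff $(i_1,\dots,i_l)=(\pi(j_1),\dots,\pi(j_l))$ for some permutation $\pi\in S_n$; an order-$l$ equivalence class is an element of $[n]^l/_\sim$ (equivalently, the set of all multi-indices with a given equality pattern among their entries). The basis tensor of an order-$l$ class $\gamma$ is $\mathbf{B}^\gamma\in\mathbb{R}^{n^l}$ with $\mathbf{B}^\gamma_{\mathbf{i}}=1$ if $\mathbf{i}\in\gamma$ and $0$ otherwise; for an order-$2k$ class $\mu$ we write $\mathbf{B}^\mu_{\mathbf{i},\mathbf{j}}$ for the entry at the concatenated index $(\mathbf{i},\mathbf{j})$. Augmentation: given $\mathbf{X}\in\mathbb{R}^{n^k\times d}$ (rows $\mathbf{X}_{\mathbf{i}}$ indexed by $\mathbf{i}=(i_1,\dots,i_k)\in[n]^k$), node identifiers $\mathbf{P}$ and type identifiers $\mathbf{E}^\gamma$, the augmented tensor $\mathbf{X}^{in}\in\mathbb{R}^{n^k\times(d+kd_p+d_e)}$ has rows $\mathbf{X}^{in}_{\mathbf{i}}=[\mathbf{X}_{\mathbf{i}},\mathbf{P}_{i_1},\dots,\mathbf{P}_{i_k},\mathbf{E}^{\gamma}]$ where $\gamma$ is the order-$k$ class containing $\mathbf{i}$. A self-attention head on $\mathbf{Z}\in\mathbb{R}^{n^k\times d_{\mathcal{T}}}$ has coefficients $\boldsymbol{\alpha}=\mathrm{softmax}\big((\mathbf{Z}w^Q+\mathbf{1}(b^Q)^\top)(\mathbf{Z}w^K+\mathbf{1}(b^K)^\top)^\top/\sqrt{d_H}\big)$,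 with softmax taken over each row (over keys $\mathbf{j}\in[n]^k$). *)

From HB Require Import structures.
From mathcomp Require Import all_boot all_order all_algebra all_fingroup.
From mathcomp Require Import reals sequences exp.
Set Implicit Arguments. Unset Strict Implicit. Unset Printing Implicit Defensive.
Import Order.TTheory GRing.Theory Num.Theory.
Local Open Scope ring_scope.

Definition idx (n l : nat) := {ffun 'I_l -> 'I_n}.

Definition equivb (n l : nat) (i j : idx n l) : bool :=
  [exists pi : {perm 'I_n}, i == [ffun a => pi (j a)]].

Definition is_eqclass (n l : nat) (C : {set idx n l}) : Prop :=
  exists i0 : idx n l, C = [set j | equivb i0 j].

Definition concat_idx (n k : nat) (i j : idx n k) : idx n (k + k) :=
  [ffun a => match split a with inl a1 => i a1 | inr a2 => j a2 end].

Definition basisB (R : nzRingType) (n k : nat) (mu : {set idx n (k + k)})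
  (i j : idx n k) : R := (concat_idx i j \in mu)%:R.

Definition Pcat (R : nzRingType) (n k dp : nat) (P : 'M[R]_(n, dp)) (i : idx n k)
  : 'rV[R]_(k * dp) := mxvec (\matrix_(a < k, c < dp) P (i a) c).

(* augmented input row X^in_i = [X_i, P_{i_1},...,P_{i_k}, E^{gamma(i)}];
   E is given as a function of the multi-index, required (in the statement)
   to be constant on equivalence classes *)
Definition Xin (R : nzRingType) (n k d dp de : nat) (X : idx n k -> 'rV[R]_d)
  (P : 'M[R]_(n, dp)) (E : idx n k -> 'rV[R]_de) (i : idx n k)
  : 'rV[R]_(d + (k * dp + de)) := row_mx (X i) (row_mx (@Pcat R n k dp P i) (E i)).

Definition attn_score (R : realType) (n k dT dH : nat) (Z : idx n k -> 'rV[R]_dT)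
  (wQ wK : 'M[R]_(dT, dH)) (bQ bK : 'rV[R]_dH) (i j : idx n k) : R :=
  ((Z i *m wQ + bQ) *m (Z j *m wK + bK)^T) 0 0 / Num.sqrt (dH%:R).

Definition attn (R : realType) (n k dT dH : nat) (Z : idx n k -> 'rV[R]_dT)
  (wQ wK : 'M[R]_(dT, dH)) (bQ bK : 'rV[R]_dH) (i j : idx n k) : R :=
  expR (attn_score Z wQ wK bQ bK i j) /
  \sum_(j' : idx n k) expR (attn_score Z wQ wK bQ bK i j').

From HB Require Import structures.
From mathcomp Require Import all_boot all_order all_algebra all_fingroup.
From mathcomp Require Import reals sequences exp.
From mathcomp Require Import lra ring.
Set Implicit Arguments. Unset Strict Implicit. Unset Printing Implicit Defensive.
Import Order.TTheory GRing.Theory Num.Theory.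
Local Open Scope ring_scope.

(* The class mu is the set of multi-indices with the equality pattern of some
   x0 = (i0, j0).  For a query i with the pattern of i0, (i, j) lies in mu iff
   j has the pattern of j0 and each test i_a = j_b agrees with i0_a = j0_b.
   Orthonormal node identifiers give <P_(i_a), P_(j_b)> = [i_a = j_b], so a
   query weighting P_(i_a) by the sign of [i0_a = j0_b], and a key carrying
   P_(j_1), ..., P_(j_k) together with the type bit [j ~ j0], produce the score
   L (T - m(j) + [j ~ j0]), where T counts the pairs (a, b) with i0_a = j0_b
   and m(j) the pairs on which the two tests disagree.  The score is maximal
   exactly on mu and drops by at least L elsewhere, so the softmax is within
   #|[n]^k| exp(-L) of the uniform distribution on the row of mu, and L is
   then taken large. *)

Lemma perm_extend_in (T : finType) (g : T -> T) (s : seq T) :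
  {in s &, injective g} -> exists p : {perm T}, {in s, forall v, p v = g v}.
Proof.
elim: s => [|w s IH] ginj; first by exists 1%g.
have [|p Hp] := IH; first by move=> x y xs ys; apply: ginj; rewrite inE ?xs ?ys orbT.
case ws: (w \in s).
  by exists p => v; rewrite inE => /orP [/eqP -> | /Hp //]; apply: Hp.
exists (p * tperm (p w) (g w))%g => v; rewrite inE permM => /orP [/eqP -> | vs].
  by rewrite tpermL.
rewrite (Hp v vs) tpermD //.
  rewrite -(Hp v vs) (inj_eq perm_inj); apply/eqP => vw.
  by rewrite vw vs in ws.
apply/eqP => /ginj; rewrite !inE eqxx vs orbT => /(_ isT isT) vw.
by rewrite vw vs in ws.
Qed.

Section Patterns.
Variable n : nat.

Definition cross_pattern l m (x : idx n l) (y : idx n m) (u : idx n l) (v : idx n m)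
    : bool :=
  [forall a, forall b, (x a == y b) == (u a == v b)].

Definition same_pattern l (x u : idx n l) : bool := cross_pattern x x u u.

Definition mismatches l m (x : idx n l) (y : idx n m) (u : idx n l) (v : idx n m)
    : nat :=
  (\sum_a \sum_b ((x a == y b) != (u a == v b)))%N.

Definition matches l m (x : idx n l) (y : idx n m) : nat :=
  (\sum_a \sum_b (x a == y b))%N.

Lemma mismatches_eq0 l m (x : idx n l) (y : idx n m) u v :
  (mismatches x y u v == 0)%N = cross_pattern x y u v.
Proof.
rewrite sum_nat_eq0; apply: eq_forallb => a.
by rewrite sum_nat_eq0; apply: eq_forallb => b; rewrite eqb0 negbK.
Qed.

Lemma same_pattern_eqr l (x y z : idx n l) :
  same_pattern y z -> same_pattern x y = same_pattern x z.
Proof.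
move=> /forallP yz; apply: eq_forallb => a; apply: eq_forallb => b.
by have /forallP/(_ b)/eqP -> := yz a.
Qed.

Lemma equivb_same_pattern l (x y : idx n l) : equivb x y = same_pattern x y.
Proof.
apply/idP/idP.
  case/existsP => p /eqP ->; apply/forallP => a; apply/forallP => b.
  by rewrite !ffunE (inj_eq perm_inj).
move=> /forallP xy.
pose g v := if [pick a | y a == v] is Some a then x a else v.
have gy a : g (y a) = x a.
  rewrite /g; case: pickP => [a' /eqP ya|/(_ a)]; last by rewrite eqxx.
  by have /forallP/(_ a)/eqP := xy a'; rewrite ya eqxx => /eqP.
have [|p Hp] := @perm_extend_in _ g [seq y a | a : 'I_l].
  move=> v w /mapP [a _ ->] /mapP [b _ ->]; rewrite !gy => xab.
  by have /forallP/(_ b)/eqP := xy a; rewrite xab eqxx => /esym/eqP.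
apply/existsP; exists p; apply/eqP/ffunP => a; rewrite ffunE Hp ?gy //.
by apply: map_f; rewrite mem_enum.
Qed.

Variable k : nat.

Definition lsplit_idx (x : idx n (k + k)) : idx n k := [ffun a => x (lshift k a)].
Definition rsplit_idx (x : idx n (k + k)) : idx n k := [ffun b => x (rshift k b)].

Lemma concat_idx_lshift (i j : idx n k) a : concat_idx i j (lshift k a) = i a.
Proof. by rewrite ffunE -[lshift k a]/(unsplit (inl a)) unsplitK. Qed.

Lemma concat_idx_rshift (i j : idx n k) b : concat_idx i j (rshift k b) = j b.
Proof. by rewrite ffunE -[rshift k b]/(unsplit (inr b)) unsplitK. Qed.

Lemma concat_split_idx (x : idx n (k + k)) : concat_idx (lsplit_idx x) (rsplit_idx x) = x.
Proof.
by apply/ffunP => a; rewrite ffunE -{2}[a]splitK; case: split => b; rewrite ffunE.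
Qed.

Lemma same_pattern_concat (x y u v : idx n k) :
  same_pattern (concat_idx x y) (concat_idx u v) =
  [&& same_pattern x u, cross_pattern x y u v & same_pattern y v].
Proof.
apply/forallP/and3P => [h | [/forallP hx /forallP hxy /forallP hy] a].
  have h2 a b := forallP (h a) b.
  split; apply/forallP => a; apply/forallP => b.
  - by have := h2 (lshift k a) (lshift k b); rewrite !concat_idx_lshift.
  - have := h2 (lshift k a) (rshift k b).
    by rewrite !concat_idx_lshift !concat_idx_rshift.
  - by have := h2 (rshift k a) (rshift k b); rewrite !concat_idx_rshift.
apply/forallP => b; rewrite -[a]splitK -[b]splitK.
case: (split a) => a'; case: (split b) => b'.
- by rewrite !concat_idx_lshift; have /forallP := hx a'.
- by rewrite !concat_idx_lshift !concat_idx_rshift; have /forallP := hxy a'.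
- rewrite !concat_idx_lshift !concat_idx_rshift [y a' == _]eq_sym [v a' == _]eq_sym.
  by have /forallP := hxy b'.
- by rewrite !concat_idx_rshift; have /forallP := hy a'.
Qed.

Lemma mem_class_concat (x0 : idx n (k + k)) (i j : idx n k) :
  (concat_idx i j \in [set l | equivb x0 l]) =
  [&& same_pattern (lsplit_idx x0) i, cross_pattern (lsplit_idx x0) (rsplit_idx x0) i j
    & same_pattern (rsplit_idx x0) j].
Proof.
by rewrite inE equivb_same_pattern -{1}(concat_split_idx x0) same_pattern_concat.
Qed.

End Patterns.

Definition pattern_sign (R : nzRingType) n k (x y : idx n k) : 'M[R]_k :=
  \matrix_(a, b) if x a == y b then 1 else -1.

Lemma sum_pattern_sign (R : nzRingType) n k (x y u v : idx n k) :
  \sum_a \sum_b pattern_sign R x y a b * (u a == v b)%:R =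
  (matches x y)%:R - (mismatches x y u v)%:R :> R.
Proof.
rewrite !natr_sum -sumrB; apply: eq_bigr => a _.
rewrite !natr_sum -sumrB; apply: eq_bigr => b _.
rewrite mxE; case: (x a == y b); case: (u a == v b);
  by rewrite /= ?mulr1 ?mulr0 ?subrr ?subr0 ?sub0r ?mulN1r.
Qed.

Lemma mxvec_dot (R : nzRingType) m n (A B : 'M[R]_(m, n)) :
  (mxvec A *m (mxvec B)^T) 0 0 = \sum_a \sum_c A a c * B a c.
Proof.
rewrite mxE (reindex (uncurry (@mxvec_index m n))) /=; last exact: curry_mxvec_bij.
by rewrite pair_big /=; apply: eq_bigr => -[a c] _ /=; rewrite !mxE !mxvecE.
Qed.

Lemma Pcat_lin_mulmx_dot (R : comNzRingType) n k dp (P : 'M[R]_(n, dp)) (S : 'M[R]_k)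
    (i j : idx n k) :
  P *m P^T = 1%:M ->
  (Pcat P i *m lin_mx (mulmx S^T) *m (Pcat P j)^T) 0 0 =
  \sum_a \sum_b S a b * (i a == j b)%:R.
Proof.
move=> hP; rewrite /Pcat mul_vec_lin mxvec_dot [RHS]exchange_big.
apply: eq_bigr => b _ /=.
under eq_bigr do rewrite !mxE big_distrl /=.
rewrite exchange_big; apply: eq_bigr => a _ /=.
have -> : (i a == j b)%:R = (P *m P^T) (i a) (j b) :> R by rewrite hP mxE.
by rewrite [in RHS]mxE mulr_sumr; apply: eq_bigr => c _; rewrite !mxE mulrA.
Qed.

Section Attention.
Variables (R : realType) (n k d dp : nat) (P : 'M[R]_(n, dp)).
Hypothesis hP : P *m P^T = 1%:M.

Definition key_mx : 'M[R]_(d + (k * dp + 1), k * dp + 1) := col_mx 0 1%:M.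

Definition query_mx (c : R) (S : 'M[R]_k) : 'M[R]_(d + (k * dp + 1), k * dp + 1) :=
  c *: col_mx 0 (block_mx (lin_mx (mulmx S^T)) 0 0 0).

Definition query_bias (c : R) : 'rV[R]_(k * dp + 1) := c *: row_mx 0 1%:M.

Lemma attn_score_query_key (c : R) (S : 'M[R]_k) (X : idx n k -> 'rV[R]_d)
    (e : idx n k -> R) (i j : idx n k) :
  attn_score (fun l => Xin X P (fun l => (e l)%:M) l *m 1%:M)
    (query_mx c S) key_mx (query_bias c) 0 i j =
  c / Num.sqrt (k * dp + 1)%:R * (\sum_a \sum_b S a b * (i a == j b)%:R + e j).
Proof.
rewrite /attn_score /Xin /query_mx /query_bias /key_mx !mulmx1 addr0.
rewrite -scalemxAr mul_row_col mulmx0 add0r mul_row_block !mulmx0 !addr0.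
rewrite -scalerDr add_row_mx add0r addr0 mul_row_col mulmx0 add0r mulmx1.
rewrite -scalemxAl tr_row_mx mul_row_col mxE mxE (Pcat_lin_mulmx_dot _ _ _ hP).
by rewrite tr_scalar_mx mul1mx mxE mulr1n mulrAC.
Qed.

End Attention.

Section Softmax.
Variables (R : realType) (I : finType).

Lemma softmax_shift (s : I -> R) (M : R) j :
  expR (s j - M) / \sum_j' expR (s j' - M) = expR (s j) / \sum_j' expR (s j').
Proof.
under eq_bigr do rewrite expRD.
by rewrite expRD -mulr_suml invfM mulrACA divff ?mulr1 // gt_eqF ?expR_gt0.
Qed.

Lemma softmax_near_uniform0 (s : I -> R) (S : pred I) (L : R) j0 :
  S j0 -> (forall j, S j -> s j = 0) -> (forall j, ~~ S j -> s j <= - L) ->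
  forall j, `| expR (s j) / \sum_j' expR (s j') - (S j)%:R / \sum_j' ((S j')%:R : R) |
    <= #|I|%:R * expR (- L).
Proof.
move=> Sj0 sS snS j.
set D := \sum_j' _; set m := \sum_j' _; set r := \sum_(j' | ~~ S j') expR (s j').
have eD : D = m + r.
  rewrite /D (bigID S) /=; congr (_ + _).
  rewrite /m [RHS](bigID S) /= [X in _ = _ + X]big1 ?addr0 => [|j' /negbTE -> //].
  by apply: eq_bigr => j' Sj'; rewrite sS // expR0 Sj'.
have m1 : 1 <= m by rewrite /m (bigD1 j0) //= Sj0 lerDl sumr_ge0.
have r0 : 0 <= r by rewrite sumr_ge0 // => *; exact: expR_ge0.
have N1 : 1 <= #|I|%:R :> R by rewrite ler1n; apply/card_gt0P; exists j0.
have eL := expR_gt0 (- L).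
have rN : r <= #|I|%:R * expR (- L).
  apply: (@le_trans _ _ (\sum_(j' | ~~ S j') expR (- L))).
    by apply: ler_sum => j' /snS; rewrite ler_expR.
  rewrite sumr_const mulr_natl; apply: ler_wpMn2l; first exact: ltW.
  exact: max_card.
case Sj: (S j).
  rewrite sS // expR0 eD /= -[X in X / m]/(1 : R).
  have -> : 1 / (m + r) - 1 / m = - (r / (m * (m + r))).
    by field; apply/andP; split; apply: lt0r_neq0; lra.
  rewrite normrN ger0_norm ?divr_ge0 ?mulr_ge0 //; try lra.
  have mmr : 1 <= m * (m + r) by nra.
  apply: (le_trans _ rN); rewrite ler_pdivrMr; nra.
have sjL : expR (s j) <= expR (- L) by rewrite ler_expR snS ?Sj.
rewrite /= mul0r subr0 ger0_norm ?divr_ge0 ?expR_ge0 //; last lra.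
rewrite ler_pdivrMr; nra.
Qed.

Lemma softmax_near_uniform (s : I -> R) (S : pred I) (M L : R) j0 :
  S j0 -> (forall j, S j -> s j = M) -> (forall j, ~~ S j -> s j <= M - L) ->
  forall j, `| expR (s j) / \sum_j' expR (s j') - (S j)%:R / \sum_j' ((S j')%:R : R) |
    <= #|I|%:R * expR (- L).
Proof.
move=> Sj0 sS snS j; rewrite -(softmax_shift s M).
apply: (softmax_near_uniform0 (s := fun j => s j - M)) Sj0 _ _ j => j' hj'.
  by rewrite sS ?subrr.
by have := snS j' hj'; lra.
Qed.

Lemma exists_expR_tail_lt (N delta : R) :
  0 <= N -> 0 < delta -> exists2 L : R, 0 <= L & N * expR (- L) < delta.
Proof.
move=> N0 delta0; exists (N / delta); first exact: divr_ge0 (ltW _).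
rewrite expRN ltr_pdivrMr ?expR_gt0 //.
have := expR_ge1Dx (N / delta).
have : delta * (N / delta) = N by rewrite mulrC divfK ?gt_eqF.
nra.
Qed.

End Softmax.

Theorem lemma1 (R : realType) (n k d dp : nat)
  (hn : (0 < n)%N) (hk : (0 < k)%N) (hd : (0 < d)%N) (hdp : (n <= dp)%N)
  (P : 'M[R]_(n, dp)) (hP : P *m P^T = 1%:M)
  (mu : {set idx n (k + k)}) (hmu : is_eqclass mu)
  (delta : R) (hdelta : 0 < delta) :
  exists (de : nat) (E : idx n k -> 'rV[R]_de),
    (forall i j : idx n k, equivb i j -> E i = E j) /\
  exists (dT : nat) (win : 'M[R]_(d + (k * dp + de), dT))
         (dH : nat) (wQ wK : 'M[R]_(dT, dH)) (bQ bK : 'rV[R]_dH),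
    [/\ (0 < de)%N, (0 < dT)%N, (0 < dH)%N &
    forall (X : idx n k -> 'rV[R]_d) (i j : idx n k),
      0 < \sum_(j' : idx n k) basisB R mu i j' ->
      `| attn (fun l => Xin X P E l *m win) wQ wK bQ bK i j
         - basisB R mu i j / \sum_(j' : idx n k) basisB R mu i j' | < delta].
Proof.
case: hmu => x0 ->{mu}; set i0 := lsplit_idx x0; set j0 := rsplit_idx x0.
pose E l : 'rV[R]_1 := ((same_pattern j0 l)%:R)%:M.
exists 1%N, E; split.
  by move=> i j; rewrite equivb_same_pattern /E => /same_pattern_eqr ->.
have [L L0 hL] := exists_expR_tail_lt (ler0n R #|{: idx n k}|) hdelta.
pose c := L * Num.sqrt (k * dp + 1)%:R.
pose wQ := query_mx d dp c (pattern_sign R i0 j0).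
pose wK := key_mx R k d dp.
pose bQ := query_bias k dp c.
exists _, 1%:M, _, wQ, wK, bQ, 0.
split; rewrite ?addn1 ?addnS // => X i j hsum.
have score l : attn_score (fun l => Xin X P E l *m 1%:M) wQ wK bQ 0 i l =
    L * ((matches i0 j0)%:R - (mismatches i0 j0 i l)%:R + (same_pattern j0 l)%:R).
  rewrite attn_score_query_key // sum_pattern_sign mulfK //.
  by rewrite gt_eqF ?sqrtr_gt0 ?ltr0n ?addn1.
have [j1 hj1] : exists j1, concat_idx i j1 \in [set l | equivb x0 l].
  apply/existsP; apply: contraTT hsum => /existsPn none.
  by rewrite big1 ?ltxx // => l _; rewrite /basisB (negbTE (none l)).
have hi : same_pattern i0 i by move: hj1; rewrite mem_class_concat => /and3P[].
apply: le_lt_trans hL.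
apply: (softmax_near_uniform (S := fun l => concat_idx i l \in [set l | equivb x0 l])
  (M := L * ((matches i0 j0)%:R + 1)) hj1) => l.
  rewrite mem_class_concat hi /= -mismatches_eq0 => /andP[/eqP mis0 same].
  by rewrite score mis0 same subr0.
rewrite mem_class_concat hi /= score => hl.
have : (same_pattern j0 l <= mismatches i0 j0 i l)%N.
  by case: (same_pattern j0 l) hl; rewrite ?andbT // -mismatches_eq0 lt0n.
rewrite -(ler_nat R); nra.
Qed.
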